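(* Fix $k=1$ and $\epsilon$ with $0\le\epsilon\le1/2$, and assume $\sqrt n\le m^{\epsilon}$. Any deterministic coverage oracle that stores a datastructure of at most $b=nm^{1-2\epsilon}$ bits does not attain an approximation ratio of $O(n^{1/2-\delta})$ for any constant $\delta>0$.
   Context: A set system with $n$ items and $m$ sets is a pair $(\mathcal X,\mathcal I)$ with $\mathcal X=\{1,\dots,n\}$ and $\mathcal I$ an indexed family of $m$ subsets of $\mathcal X$. For $k\ge1$ and a query $Q\subseteq\mathcal X$, $OPT(k,\mathcal X,\mathcal I,Q)=\max\{|(\bigcup_{S\in\mathcal J}S)\cap Q| : \mathcal J\subseteq\mathcal I,|\mathcal J|\le k\}$. A deterministic coverage oracle consists of a deterministic static stage mapping $(n,m,k,(\mathcal X,\mathcal I))$ to a bit string $\mathcal D$ (the datastructure), and a deterministic dynamic stage mapping $(\mathcal D,Q)$, for $Q\subseteq\mathcal X$, to (indices of) $\mathcal J\subseteq\mathcal I$ with $|\mathcal J|\le k$, without access to $(\mathcal X,\mathcal I)$; $\mathcal A(k,\mathcal X,\mathcal I,Q)=|(\bigcup_{S\in\mathcal J}S)\cap Q|$. The approximation ratio is $\max OPT/\mathcal A$ over all set systems with $n$ items and $m$ sets and all queries $Q$. No computational restrictions are assumed. *)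

From Stdlib Require Import Reals.
From mathcomp Require Import all_boot.
Set Implicit Arguments. Unset Strict Implicit. Unset Printing Implicit Defensive.

Definition setsys (n m : nat) := 'I_m -> {set 'I_n}.

Definition coverage (n m : nat) (I : setsys n m) (J : {set 'I_m})
  (Q : {set 'I_n}) : nat :=
  #|(\bigcup_(i in J) I i) :&: Q|.

Definition OPT (k n m : nat) (I : setsys n m) (Q : {set 'I_n}) : nat :=
  \max_(J : {set 'I_m} | #|J| <= k) coverage I J Q.

Definition valid_params (eps : R) (n m : nat) : Prop :=
  (0 < m)%nat /\ Rle (sqrt (INR n)) (Rpower (INR m) eps).

Definition static_stage := forall n m : nat, setsys n m -> seq bool.
(* Deterministic dynamic stage: (n, m, datastructure, query) -> indices of
   chosen sets. It has no access to the set system. *)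
Definition dynamic_stage := forall n m : nat, seq bool -> {set 'I_n} -> {set 'I_m}.

From Stdlib Require Import Reals Lra.
From mathcomp Require Import all_boot all_algebra zify.
Set Implicit Arguments. Unset Strict Implicit. Unset Printing Implicit Defensive.

(* The hard instances: items are the points of F x F for a prime field F,
   sets are the graphs of all polynomials of degree < d, listed in an
   arbitrary order s, and the query is the graph of one polynomial a.
   Taking the set a itself covers |F| items, while two distinct graphs meet
   in fewer than d points.  So an oracle that always covers at least d items
   must answer with the index s^-1(a); querying every a then recovers the
   whole enumeration s from the datastructure.  There are m! enumerations
   but, when b <= m, only (m + 1) 2^m < m! possible datastructures, so some
   (s, a) makes the oracle cover fewer than d items.  With n = p^2, m = p^d
   and d eps >= 1 the space bound gives b <= m, and the ratio exceeds p / d,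
   which beats C n^(1/2 - delta) = C p^(1 - 2 delta) once p is large. *)

Section PolynomialGraphs.
Import GRing.Theory.
Local Open Scope ring_scope.
Variable F : finFieldType.

Definition poly_graph (q : {poly F}) : {set F * F} := [set (x, q.[x]) | x : F].

Lemma card_poly_graph q : #|poly_graph q| = #|F|.
Proof. by rewrite card_imset // => x y []. Qed.

Lemma card_poly_graphI_lt q r :
  q != r -> (#|poly_graph q :&: poly_graph r| < size (q - r)%R)%N.
Proof.
rewrite -subr_eq0 => qr_neq0.
set roots := [set x | root (q - r) x].
have roots_lt : (#|roots| < size (q - r)%R)%N.
  rewrite cardE; apply: max_poly_roots => //; last exact: enum_uniq.
  by apply/allP => x; rewrite mem_enum inE.
have graph_inj : injective (fun x => (x, q.[x])) by move=> x y [].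
apply: leq_ltn_trans roots_lt; rewrite -(card_imset roots graph_inj).
apply/subset_leq_card/subsetP => _ /setIP[/imsetP[x _ ->] /imsetP[y _ [<- qr_x]]].
by apply: imset_f; rewrite inE /root hornerD hornerN qr_x subrr.
Qed.

Variable d : nat.

Definition tuple_poly (a : d.-tuple F) : {poly F} := \poly_(i < d) a`_i.

Lemma tuple_poly_inj : injective tuple_poly.
Proof.
move=> a b eq_ab; apply/val_inj/(@eq_from_nth _ 0); rewrite !size_tuple //.
by move=> i lt_id; have := congr1 (coefp i) eq_ab; rewrite /= !coef_poly lt_id.
Qed.

Lemma size_tuple_polyB (a b : d.-tuple F) :
  (size (tuple_poly a - tuple_poly b)%R <= d)%N.
Proof.
by apply: leq_trans (size_polyD _ _) _; rewrite size_polyN geq_max !size_poly.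
Qed.

Lemma card_tuple_graphI_lt (a b : d.-tuple F) :
  a != b -> (#|poly_graph (tuple_poly a) :&: poly_graph (tuple_poly b)| < d)%N.
Proof.
move=> neq_ab; apply: leq_trans (size_tuple_polyB a b).
by apply: card_poly_graphI_lt; rewrite (inj_eq tuple_poly_inj).
Qed.

End PolynomialGraphs.

Lemma card_le_bitseq (A : finType) (D : {set A}) (f : A -> seq bool) (N : nat) :
  (forall x, size (f x) <= N) -> {in D &, injective f} -> #|D| <= N.+1 * 2 ^ N.
Proof.
move=> size_f f_inj.
pose code (s : seq bool) := (inord (size s) : 'I_N.+1, [ffun i : 'I_N => nth false s i]).
have code_inj : {in D &, injective (code \o f)}.
  move=> x y x_D y_D /= [/(congr1 val)].
  rewrite /= !inordK ?ltnS // => size_eq nth_eq.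
  apply: f_inj => //; apply: (@eq_from_nth _ false) => // i lt_i.
  have lt_iN : i < N by apply: leq_trans lt_i (size_f x).
  have := congr1 (fun g : {ffun _ -> bool} => g (Ordinal lt_iN)) nth_eq.
  by rewrite !ffunE.
rewrite -(card_in_imset code_inj).
apply: leq_trans (max_card _) _.
by rewrite card_prod card_ord card_ffun card_bool card_ord.
Qed.

Lemma bitseq_count_lt_fact N : 7 < N -> N.+1 * 2 ^ N < N`!.
Proof.
elim: N => // N IH; rewrite ltnS leq_eqVlt => /predU1P[<- // | lt7N].
rewrite factS expnS; apply: (@leq_ltn_trans (N.+1 * N.+1 * 2 ^ N)).
  by rewrite mulnA leq_mul2r; apply/orP; right; nia.
by rewrite -mulnA ltn_pmul2l // IH.
Qed.

Section GraphSystem.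
Variables (F : finFieldType) (d : nat).
Local Notation P := (d.-tuple F).
Local Notation n := #|{: F * F}|.
Local Notation m := #|{: P}|.

Definition graph_query (a : P) : {set 'I_n} :=
  enum_rank @: poly_graph (tuple_poly a).

Definition graph_system (s : 'I_m -> P) : setsys n m := graph_query \o s.

Lemma coverage_graph_system1 s j a :
  coverage (graph_system s) [set j] (graph_query a) =
  #|poly_graph (tuple_poly (s j)) :&: poly_graph (tuple_poly a)|.
Proof.
rewrite /coverage big_set1 /graph_system /graph_query /= -imsetI.
  by rewrite card_imset //; apply: enum_rank_inj.
by move=> x y _ _; apply: enum_rank_inj.
Qed.

Lemma OPT_graph_system (s : 'I_m -> P) a :
  injective s -> #|F| <= OPT 1 (graph_system s) (graph_query a).
Proof.
move=> s_inj; have /codomP[j ->] : a \in codom s.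
  by apply: inj_card_onto => //; rewrite card_ord.
apply: leq_trans (leq_bigmax_cond [set j] _); last by rewrite cards1.
by rewrite coverage_graph_system1 setIid card_poly_graph.
Qed.

Lemma graph_system_answer s a (J : {set 'I_m}) :
  0 < d -> #|J| <= 1 -> d <= coverage (graph_system s) J (graph_query a) ->
  exists2 j, J = [set j] & s j = a.
Proof.
move=> d_gt0; rewrite leq_eqVlt ltnS leqn0 => /orP[/cards1P[j ->] | /eqP/cards0_eq ->].
  rewrite coverage_graph_system1 => cov_ge; exists j => //.
  by apply/eqP; apply: contraTT cov_ge; rewrite -ltnNge => /card_tuple_graphI_lt.
by rewrite /coverage big_set0 set0I cards0 leqNgt d_gt0.
Qed.

Variables (st : setsys n m -> seq bool) (dy : seq bool -> {set 'I_n} -> {set 'I_m}).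
Hypotheses (size_st : forall I, size (st I) <= m) (card_dy : forall D Q, #|dy D Q| <= 1).

Local Notation answer s a :=
  (coverage (graph_system s) (dy (st (graph_system s)) (graph_query a)) (graph_query a)).

Lemma graph_system_oracle_fails :
  0 < d -> m.+1 * 2 ^ m < m`! ->
  exists (s : {ffun 'I_m -> P}) (a : P), injective s /\ answer s a < d.
Proof.
move=> d_gt0 count_lt.
pose fails (s : {ffun 'I_m -> P}) a := injectiveb s && (answer s a < d).
have [/existsP[s /existsP[a /andP[/injectiveP s_inj cov_lt]]] | /existsPn no_fail] :=
  boolP [exists s, [exists a, fails s a]].
  by exists s, a.
have answer_ge (s : {ffun _ -> P}) a : injective s -> d <= answer s a.
  move/injectiveP => s_inj; move/existsPn/(_ a): (no_fail s).
  by rewrite /fails s_inj /= -leqNgt.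
have st_inj : {in [set s : {ffun 'I_m -> P} | injectiveb s] &,
                 injective (fun s : {ffun 'I_m -> P} => st (graph_system s))}.
  move=> s1 s2; rewrite !inE => /injectiveP s1_inj /injectiveP s2_inj /= st_eq.
  apply/ffunP => j.
  have [j1 dy1 /s1_inj j1_j] :=
    graph_system_answer d_gt0 (card_dy _ _) (answer_ge s1 (s1 j) s1_inj).
  have [j2 dy2 <-] := graph_system_answer d_gt0 (card_dy _ _) (answer_ge s2 (s1 j) s2_inj).
  by move: dy2; rewrite -st_eq dy1 j1_j => /set1_inj ->.
have := card_le_bitseq (fun s => size_st _) st_inj.
by rewrite card_inj_ffuns card_ord ffactnn leqNgt count_lt.
Qed.

End GraphSystem.

Section RealParameters.
Local Open Scope R_scope.

Lemma INR_expn_Rpower (p k : nat) : (0 < p)%N -> INR (p ^ k)%N = Rpower (INR p) (INR k).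
Proof.
move=> p_gt0; rewrite Rpower_pow; last by apply/lt_0_INR/ltP.
by elim: k => //= k IH; rewrite expnS mult_INR IH.
Qed.

Lemma valid_params_pow eps (p d : nat) :
  (0 < p)%N -> 1 <= INR d * eps -> valid_params eps (p ^ 2) (p ^ d).
Proof.
move=> p_gt0 d_eps; split; first by rewrite expn_gt0 p_gt0.
have p_ge1 : 1 <= INR p by apply: (le_INR 1); apply/leP.
rewrite (INR_expn_Rpower 2 p_gt0) Rpower_pow /= ?Rmult_1_r; last lra.
rewrite sqrt_square; last lra.
rewrite INR_expn_Rpower // Rpower_mult -{1}(Rpower_1 (INR p)); last lra.
exact: Rle_Rpower.
Qed.

Lemma space_bound_pow_le eps (p d : nat) :
  (0 < p)%N -> 1 <= INR d * eps ->
  INR (p ^ 2)%N * Rpower (INR (p ^ d)%N) (1 - 2 * eps) <= INR (p ^ d)%N.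
Proof.
move=> p_gt0 d_eps; have p_ge1 : 1 <= INR p by apply: (le_INR 1); apply/leP.
rewrite !INR_expn_Rpower // Rpower_mult -Rpower_plus.
by apply: Rle_Rpower => //=; nra.
Qed.

Lemma Rpower_INR_unbounded (e y : R) :
  0 < e -> exists k : nat, forall p : nat, (k < p)%N -> y < Rpower (INR p) e.
Proof.
move=> e_gt0; set y1 := Rmax y 1.
have y1_gt0 : 0 < y1 by apply: Rlt_le_trans (Rmax_r y 1); lra.
have [k k_big] := INR_unbounded (exp (ln y1 / e)).
exists k => p /ltP/lt_INR k_lt_p.
apply: Rle_lt_trans (Rmax_l y 1) _; rewrite -/y1 -(exp_ln y1) //.
apply: exp_increasing; rewrite -(Rmult_comm (ln (INR p))).
have ln_lt : ln y1 / e < ln (INR p).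
  by rewrite -(ln_exp (ln y1 / e)); apply: ln_increasing; [apply: exp_pos | lra].
by apply: (Rmult_lt_reg_r (/ e)); [apply: Rinv_0_lt_compat | field_simplify; lra].
Qed.

Lemma approximation_gap (C delta : R) (p n d cov opt : nat) :
  (0 < p)%N -> n = (p ^ 2)%N -> 0 < C -> (cov <= d)%N -> (p <= opt)%N ->
  C * INR d < Rpower (INR p) (2 * delta) ->
  C * Rpower (INR n) (1/2 - delta) * INR cov < INR opt.
Proof.
move=> p_gt0 -> C_gt0 /leP/le_INR cov_d /leP/le_INR p_opt Cd_lt.
have p_pos : 0 < INR p by apply/lt_0_INR/ltP.
rewrite INR_expn_Rpower // Rpower_mult.
have split_p :
  Rpower (INR p) (INR 2 * (1/2 - delta)) * Rpower (INR p) (2 * delta) = INR p.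
  by rewrite -Rpower_plus -{2}(Rpower_1 (INR p)) //; f_equal; simpl; field.
set y := Rpower _ (_ * (1/2 - delta)) in split_p *.
set z := Rpower _ (2 * delta) in split_p Cd_lt.
have y_gt0 : 0 < y by apply: exp_pos.
have Cy_gt0 : 0 < C * y by apply: Rmult_lt_0_compat.
apply: Rle_lt_trans (Rmult_le_compat_l _ _ _ (Rlt_le _ _ Cy_gt0) cov_d) _.
apply: Rlt_le_trans p_opt.
rewrite -split_p Rmult_assoc (Rmult_comm C) Rmult_assoc (Rmult_comm (INR d)).
exact: Rmult_lt_compat_l.
Qed.

Lemma exists_nat_scale_ge1 eps :
  0 < eps -> exists2 d : nat, (0 < d)%N & 1 <= INR d * eps.
Proof.
move=> eps_gt0; have inv_gt0 := Rinv_0_lt_compat _ eps_gt0.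
have [d d_big] := INR_unbounded (/ eps); exists d.
  by apply/ltP/INR_lt; rewrite /=; lra.
have := Rmult_lt_compat_r eps _ _ eps_gt0 d_big; rewrite Rinv_l; lra.
Qed.

End RealParameters.

Theorem mainTheorem8 (eps delta : R)
  (heps : Rlt 0 eps /\ Rle eps (1/2)) (hdelta : Rlt 0 delta)
  (st : static_stage) (dy : dynamic_stage)
  (hdy : forall n m (D : seq bool) (Q : {set 'I_n}),
      valid_params eps n m -> (#|dy n m D Q| <= 1)%N)
  (hspace : forall n m (I : setsys n m), valid_params eps n m ->
      Rle (INR (size (st n m I))) (Rmult (INR n) (Rpower (INR m) (1 - 2 * eps)))) :
  forall (C : R) (N0 : nat), Rlt 0 C ->
    exists (n m : nat), (N0 <= n)%N /\ valid_params eps n m /\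
      exists (I : setsys n m) (Q : {set 'I_n}),
        Rlt (Rmult (Rmult C (Rpower (INR n) (1/2 - delta)))
                   (INR (coverage I (dy n m (st n m I) Q) Q)))
            (INR (OPT 1 I Q)).
Proof.
move=> C N0 C_gt0; have [d d_gt0 d_eps] := exists_nat_scale_ge1 (proj1 heps).
have [k large_p] :=
  Rpower_INR_unbounded (C * INR d) (ltac:(lra) : Rlt 0 (2 * delta)).
have [p] := prime_above (maxn (maxn k N0) 7).
rewrite !gtn_max => /andP[/andP[k_lt_p N0_lt_p] p_gt7] p_prime.
have p_gt0 : 0 < p by apply: ltn_trans p_gt7.
set n := #|{: 'F_p * 'F_p}|; set m := #|{: d.-tuple 'F_p}|.
have n_eq : n = p ^ 2 by rewrite /n card_prod card_Fp.
have m_eq : m = p ^ d by rewrite /m card_tuple card_Fp.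
have valid : valid_params eps n m by rewrite n_eq m_eq; apply: valid_params_pow.
have size_st I : size (st n m I) <= m.
  apply/leP/INR_le/(Rle_trans _ _ _ (hspace n m I valid)).
  by rewrite n_eq m_eq; apply: space_bound_pow_le.
have p_le_pow e : 0 < e -> p <= p ^ e.
  by move=> e_gt0; rewrite -{1}(expn1 p) leq_pexp2l // (ltn_trans _ p_gt7).
have count_lt : m.+1 * 2 ^ m < m`!.
  by apply: bitseq_count_lt_fact; rewrite m_eq (leq_trans p_gt7) ?p_le_pow.
have [s [a [s_inj cov_lt]]] :=
  graph_system_oracle_fails size_st (fun D Q => hdy n m D Q valid) d_gt0 count_lt.
exists n, m; split; first by rewrite n_eq (leq_trans (ltnW N0_lt_p)) ?p_le_pow.
split=> //; exists (graph_system s), (graph_query a).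
apply: (approximation_gap p_gt0 n_eq C_gt0 (ltnW cov_lt) _ (large_p p k_lt_p)).
by rewrite -{1}(card_Fp p_prime); apply: OPT_graph_system.
Qed.
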